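(* Let $\Lambda$ be a lattice and let $B\subset\Lambda$ be a finite subset. Let $B=B_1\cup B_2$ be an integral decomposition of $B$, and let $D\subseteq B$ be an irreducible subset. Then $D\subseteq B_1$ or $D\subseteq B_2$.
   Context: A lattice is a free abelian group of finite rank. For a subset $A\subseteq\Lambda$, $\langle A\rangle_{\mathbb Z}$ denotes the subgroup generated by $A$ and $\langle A\rangle_{\mathbb C}$ the complex subspace of $\Lambda\otimes_{\mathbb Z}\mathbb C$ it spans. The completion of a subgroup $\Delta\subseteq\Lambda$ is $\overline{\Delta}=\langle\Delta\rangle_{\mathbb C}\cap\Lambda$. An integral decomposition of a finite set $B\subset\Lambda$ is a partition $B=\bigcup_i B_i$ such that $\overline{\langle B\rangle_{\mathbb Z}}=\bigoplus_i\overline{\langle B_i\rangle_{\mathbb Z}}$ (internal direct sum). $B$ is irreducible if it has no nontrivial integral decomposition. *)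

From HB Require Import structures.
From mathcomp Require Import all_boot all_order all_algebra all_field.
From mathcomp Require Import finmap.
Set Implicit Arguments. Unset Strict Implicit. Unset Printing Implicit Defensive.
Import Order.TTheory GRing.Theory Num.Theory.
Local Open Scope ring_scope.
Local Open Scope fset_scope.

(* The lattice Lambda is modelled as Z^n = 'rV[int]_n (every lattice is
   isomorphic to some Z^n, and all notions below are transported by
   isomorphisms).  Lambda (x) C is modelled as 'rV[algC]_n. *)

Definition toC n (x : 'rV[int]_n) : 'rV[algC]_n := map_mx (fun z : int => z%:~R) x.

(* matrix whose rows are the images in Lambda (x) C of the elements of A;
   its row space is <A>_C *)
Definition cspan_mx n (A : {fset 'rV[int]_n}) : 'M[algC]_(size (enum_fset A), n) :=
  \matrix_(i < size (enum_fset A)) toC (nth 0 (enum_fset A) i).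

(* completion of <A>_Z : elements of Lambda lying in <<A>_Z>_C = <A>_C *)
Definition completion n (A : {fset 'rV[int]_n}) : pred 'rV[int]_n :=
  fun x => (toC x <= cspan_mx A)%MS.

(* Bs is a partition of B, indexed by the finite type I (blocks may be empty) *)
Definition is_partition n (I : finType) (B : {fset 'rV[int]_n})
    (Bs : I -> {fset 'rV[int]_n}) : Prop :=
  (forall x, x \in B <-> exists i, x \in Bs i) /\
  (forall i j, i != j -> Bs i `&` Bs j = fset0).

Definition internal_direct_sum n (I : finType) (B : {fset 'rV[int]_n})
    (Bs : I -> {fset 'rV[int]_n}) : Prop :=
  (forall x, completion B x <->
     exists y : I -> 'rV[int]_n,
       (forall i, completion (Bs i) (y i)) /\ x = \sum_i y i) /\
  (forall y : I -> 'rV[int]_n,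
     (forall i, completion (Bs i) (y i)) -> \sum_i y i = 0 -> forall i, y i = 0).

Definition integral_decomposition n (I : finType) (B : {fset 'rV[int]_n})
    (Bs : I -> {fset 'rV[int]_n}) : Prop :=
  is_partition B Bs /\ internal_direct_sum B Bs.

(* irreducible: every integral decomposition is trivial, i.e. one block
   contains all of B (so all other blocks are empty) *)
Definition irreducible_set n (B : {fset 'rV[int]_n}) : Prop :=
  forall (k : nat) (Bs : 'I_k -> {fset 'rV[int]_n}),
    integral_decomposition B Bs -> exists i, B `<=` Bs i.

From mathcomp Require Import all_boot all_order all_algebra all_field.
From mathcomp Require Import finmap.
(* Restricting an integral decomposition B = B_1 u ... u B_k to a subset D of B
   gives an integral decomposition of D into the D n B_i; irreducibility of D
   then makes one of them all of D.  The only real point is that x in the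
   completion of <D> splits in the completions of the <D n B_i>.  Since row
   space inclusion does not change from Q to C, spans can be taken over Q.
   Write x = sum y_i with y_i in the completion of <B_i>, and toQ x = sum w_i
   with w_i in the Q-span of D n B_i.  The y_i - w_i are Q-vectors in the
   spans of the B_i summing to 0; clearing a common denominator makes this an
   integral relation, so directness of the decomposition of B gives y_i = w_i. *)

Set Implicit Arguments. Unset Strict Implicit. Unset Printing Implicit Defensive.
Import GRing.Theory Num.Theory.
Local Open Scope ring_scope.

Section RationalSpans.

Variable n : nat.
Implicit Types (A : {fset 'rV[int]_n}) (x y : 'rV[int]_n).

Definition toQ x : 'rV[rat]_n := map_mx (fun z : int => z%:~R) x.

Definition spanQ A : 'M[rat]_(size (enum_fset A), n) :=
  \matrix_(i < size (enum_fset A)) toQ (nth 0 (enum_fset A) i).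

Lemma toQ_inj : injective toQ.
Proof.
move=> x y /matrixP eq_xy; apply/matrixP=> i j.
by have := eq_xy i j; rewrite !mxE => /intr_inj.
Qed.

Lemma toQ_sum (I : finType) (y : I -> 'rV[int]_n) :
  toQ (\sum_i y i) = \sum_i toQ (y i).
Proof. exact: raddf_sum. Qed.

Lemma toQ0 : toQ 0 = 0.
Proof. exact: raddf0. Qed.

Lemma completionE A x : completion A x = (toQ x <= spanQ A)%MS.
Proof.
rewrite /completion; have toC_ratr y : toC y = map_mx ratr (toQ y).
  by apply/matrixP=> i j; rewrite !mxE ratr_int.
have -> : cspan_mx A = map_mx ratr (spanQ A).
  by apply/matrixP=> i j; rewrite !mxE ratr_int.
by rewrite toC_ratr map_submx.
Qed.

Lemma spanQ_mem A a : a \in A -> (toQ a <= spanQ A)%MS.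
Proof.
move=> aA; have a_lt : (index a (enum_fset A) < size (enum_fset A))%N.
  by rewrite index_mem.
have -> : toQ a = row (Ordinal a_lt) (spanQ A) by rewrite rowK nth_index.
exact: row_sub.
Qed.

Lemma spanQ_subP A m (S : 'M[rat]_(m, n)) :
  reflect (forall a, a \in A -> (toQ a <= S)%MS) (spanQ A <= S)%MS.
Proof.
apply: (iffP idP) => [sAS a /spanQ_mem sa|sAS].
  exact: submx_trans sa sAS.
by apply/row_subP=> i; rewrite rowK sAS ?mem_nth.
Qed.

Lemma spanQS A B : (A `<=` B)%fset -> (spanQ A <= spanQ B)%MS.
Proof. by move=> /fsubsetP sAB; apply/spanQ_subP=> a /sAB/spanQ_mem. Qed.

Lemma completionS A B x : (A `<=` B)%fset -> completion A x -> completion B x.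
Proof. by rewrite !completionE => /spanQS sAB /submx_trans; apply. Qed.

Lemma completion_sum (I : finType) A (y : I -> 'rV[int]_n) :
  (forall i, completion A (y i)) -> completion A (\sum_i y i).
Proof.
rewrite completionE toQ_sum => Ay; apply: summx_sub => i _.
by rewrite -completionE.
Qed.

Lemma scale_row_integral (v : 'rV[rat]_n) (d : int) :
  (forall j, (denq (v ord0 j) %| d)%Z) -> exists z, d%:~R *: v = toQ z.
Proof.
move=> dv_d; exists (\row_j ((d %/ denq (v ord0 j))%Z * numq (v ord0 j))).
apply/matrixP=> i j; rewrite !mxE (ord1 i) -{1}(divzK (dv_d j)) !intrM numqE.
by rewrite -mulrA (mulrC (v _ _)).
Qed.

Lemma common_denominator (I : finType) (v : I -> 'rV[rat]_n) :
  exists2 d : int, d != 0 & forall i, exists z, d%:~R *: v i = toQ z.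
Proof.
exists (\prod_i \prod_j denq (v i ord0 j)).
  by apply/prodf_neq0=> i _; apply/prodf_neq0=> j _; apply: denq_neq0.
move=> i; apply: scale_row_integral => j.
by rewrite (bigD1 i) //= (bigD1 j) //= -mulrA dvdz_mulr.
Qed.

Lemma direct_sum_spanQ_free (I : finType) B (Bs : I -> {fset 'rV[int]_n})
    (v : I -> 'rV[rat]_n) :
  internal_direct_sum B Bs -> (forall i, v i <= spanQ (Bs i))%MS ->
  \sum_i v i = 0 -> forall i, v i = 0.
Proof.
move=> [_ free_Bs] vBs sum_v0 i.
have [d d_neq0 d_int] := common_denominator v.
have {}d_int j : exists z, d%:~R *: v j == toQ z.
  by have [z ->] := d_int j; exists z.
pose z j := xchoose (d_int j).
have zE j : d%:~R *: v j = toQ (z j) by apply/eqP/(xchooseP (d_int j)).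
have zBs j : completion (Bs j) (z j) by rewrite completionE -zE scalemx_sub.
have sum_z0 : \sum_j z j = 0.
  apply: toQ_inj; rewrite toQ_sum toQ0 -(eq_bigr _ (fun j _ => zE j)).
  by rewrite -scaler_sumr sum_v0 scaler0.
have := zE i; rewrite (free_Bs z zBs sum_z0) toQ0 => /eqP.
by rewrite scaler_eq0 intr_eq0 (negbTE d_neq0) => /eqP.
Qed.

Section Restriction.

Variables (I : finType) (B D : {fset 'rV[int]_n}) (Bs : I -> {fset 'rV[int]_n}).
Hypothesis sDB : (D `<=` B)%fset.

Lemma is_partition_fsetI :
  is_partition B Bs -> is_partition D (fun i => D `&` Bs i)%fset.
Proof.
move=> [mem_B disj_B]; split=> [x|i j /disj_B disj_ij].
  split=> [xD|[i]]; last by rewrite in_fsetI => /andP[].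
  have [i xi] := proj1 (mem_B x) (fsubsetP sDB x xD).
  by exists i; rewrite in_fsetI xD.
by apply/eqP; rewrite -fsubset0 -disj_ij fsetISS ?fsubsetIr.
Qed.

Lemma internal_direct_sum_fsetI :
  is_partition B Bs -> internal_direct_sum B Bs ->
  internal_direct_sum D (fun i => D `&` Bs i)%fset.
Proof.
move=> [mem_B _] sumB; have [span_B free_B] := sumB.
have sDBs i : (D `&` Bs i `<=` Bs i)%fset by apply: fsubsetIr.
split=> [x|y yDBs]; last by apply: free_B => i; apply: completionS (yDBs i).
split=> [xD|[y [yDBs ->]]]; last first.
  by apply: completion_sum => i; apply: completionS (yDBs i); apply: fsubsetIl.
have [y [yBs x_sum]] := proj1 (span_B x) (completionS sDB xD).
pose S i := <<spanQ (D `&` Bs i)%fset>>%MS.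
have sD : (spanQ D <= \sum_i S i)%MS.
  apply/spanQ_subP => a aD; have [i ai] := proj1 (mem_B a) (fsubsetP sDB a aD).
  by apply: (sumsmx_sup i) => //; rewrite genmxE spanQ_mem // in_fsetI aD.
have /sub_sumsmxP [u xE] : (toQ x <= \sum_i S i)%MS.
  by apply: submx_trans sD; rewrite -completionE.
have yE i : toQ (y i) = u i *m S i.
  apply: subr0_eq; move: i; apply: (direct_sum_spanQ_free sumB).
    move=> i; apply: addmx_sub; first by rewrite -completionE.
    rewrite eqmx_opp; apply: submx_trans (submxMl _ _) _.
    by rewrite genmxE spanQS.
  by rewrite sumrB -toQ_sum -x_sum xE subrr.
by exists y; split=> // i; rewrite completionE yE -(genmxE (spanQ _)) submxMl.
Qed.

Lemma integral_decomposition_fsetI :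
  integral_decomposition B Bs ->
  integral_decomposition D (fun i => D `&` Bs i)%fset.
Proof.
move=> [partB sumB].
by split; [apply: is_partition_fsetI | apply: internal_direct_sum_fsetI].
Qed.

End Restriction.

End RationalSpans.

Lemma sum_enum_val (V : zmodType) (I : finType) (F : I -> V) :
  \sum_(j < #|I|) F (enum_val j) = \sum_i F i.
Proof. by rewrite -big_enum_val. Qed.

Lemma integral_decomposition_enum n (I : finType) (B : {fset 'rV[int]_n})
    (Bs : I -> {fset 'rV[int]_n}) :
  integral_decomposition B Bs ->
  integral_decomposition B (fun j : 'I_#|I| => Bs (enum_val j)).
Proof.
move=> [[mem_B disj_B] [span_B free_B]]; split; split.
- move=> x; rewrite mem_B; split=> [[i xi]|[j xj]]; last by exists (enum_val j).
  by exists (enum_rank i); rewrite enum_rankK.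
- by move=> j k jk; apply: disj_B; rewrite (inj_eq enum_val_inj).
- move=> x; rewrite span_B; split=> [[y [yBs ->]]|[y [yBs ->]]].
    by exists (y \o enum_val); split=> [j|]; rewrite ?sum_enum_val.
  exists (y \o enum_rank); split=> [i|]; first by rewrite /= -{1}(enum_rankK i).
  by rewrite -[RHS]sum_enum_val; apply: eq_bigr => j _; rewrite /= enum_valK.
- move=> y yBs sum_y0 j; rewrite -(enum_valK j).
  apply: (free_B (y \o enum_rank)) => [i|]; first by rewrite /= -{1}(enum_rankK i).
  by rewrite -sum_enum_val -{2}sum_y0; apply: eq_bigr => k _; rewrite /= enum_valK.
Qed.

Lemma irreducible_set_sub_block n (I : finType) (D : {fset 'rV[int]_n})
    (Ds : I -> {fset 'rV[int]_n}) :
  irreducible_set D -> integral_decomposition D Ds -> exists i, (D `<=` Ds i)%fset.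
Proof.
by move=> irrD /integral_decomposition_enum /irrD [j sD]; exists (enum_val j).
Qed.

Local Open Scope fset_scope.

Theorem lemma3p3 (n : nat) (B B1 B2 D : {fset 'rV[int]_n}) :
  integral_decomposition B (fun b : bool => if b then B1 else B2) ->
  D `<=` B -> irreducible_set D ->
  D `<=` B1 \/ D `<=` B2.
Proof.
move=> decB sDB irrD.
have [[] sD] := irreducible_set_sub_block irrD (integral_decomposition_fsetI sDB decB).
- by left; apply: fsubset_trans sD (fsubsetIr _ _).
- by right; apply: fsubset_trans sD (fsubsetIr _ _).
Qed.
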